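(* rATL* and ATL* are equally expressive: (i) for every rATL* formula $\varphi$ and every $t\in\mathbb{B}_4$ there is an ATL* formula $\varphi_t$ with $V(s,\varphi)\succeq t\iff\mathcal{S},s\models\varphi_t$ for all concurrent game structures $\mathcal{S}$ and states $s$; and (ii) for every ATL* formula $\psi$ there is an rATL* formula $\psi^\star$ with $\mathcal{S},s\models\psi\iff V(s,\psi^\star)=1111$ for all concurrent game structures $\mathcal{S}$ and states $s$.
   Context: Fix a finite set $\mathrm{AP}$ of atomic propositions. A concurrent game structure (CGS) is a tuple $\mathcal{S}=(St,Ag,Ac,\delta,\ell)$ where $St$ is a finite set of states, $Ag$ a finite set of agents, $Ac$ a finite set of actions, $\ell:St\to 2^{\mathrm{AP}}$ a labeling, and $\delta:St\times AV\to St$ a transition function, where $AV$ is the set of action vectors for $Ag$ (an action vector for $A\subseteq Ag$ is a map $A\to Ac$). A state $s'$ is a successor of $s$ if $s'=\delta(s,v)$ for some $v\in AV$. A path is an infinite sequence $\pi=s_0s_1s_2\cdots$ of states with $s_{n+1}$ a successor of $s_n$ for all $n$; write $\pi[n]=s_n$ and $\pi[i..]$ for the suffix $s_is_{i+1}\cdots$. A strategy for an agent is a function $f:St^+\to Ac$. For $A\subseteq Ag$ and a set $F_A=\{f_a\mid a\in A\}$ of strategies, one for each agent in $A$, $out(s,F_A)$ is the set of paths $s_0s_1\cdots$ with $s_0=s$ such that for every $n\ge 0$ there is $v\in AV$ with $v(a)=f_a(s_0\cdots s_n)$ for all $a\in A$ and $s_{n+1}=\delta(s_n,v)$. $\mathbb{B}_4=\{1111,0111,0011,0001,0000\}$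 is totally ordered by $1111\succ0111\succ0011\succ0001\succ0000$; for $b=b_1b_2b_3b_4\in\mathbb{B}_4$ and $k\in\{1,2,3,4\}$, $b[k]=b_k$; max and min on $\mathbb{B}_4$ refer to this order, and on bits to $0<1$. rATL* formulas: state formulas $\varphi::=p\mid\neg\varphi\mid\varphi\vee\varphi\mid\varphi\wedge\varphi\mid\varphi\to\varphi\mid\langle\!\langle A\rangle\!\rangle\Phi\mid[\![A]\!]\Phi$ and path formulas $\Phi::=\varphi\mid\neg\Phi\mid\Phi\vee\Phi\mid\Phi\wedge\Phi\mid\Phi\to\Phi\mid\dot\bigcirc\Phi\mid\dot\Diamond\Phi\mid\dot\Box\Phi$ ($p\in\mathrm{AP}$, $A$ a set of agents); an rATL* formula is a state formula. Valuation $V$ into $\mathbb{B}_4$: for state formulas, $V(s,p)=1111$ if $p\in\ell(s)$ else $0000$; $\vee,\wedge$ are max, min; $V(s,\neg\varphi)=0000$ if $V(s,\varphi)=1111$ else $1111$; $V(s,\varphi_1\to\varphi_2)=1111$ if $V(s,\varphi_1)\preceq V(s,\varphi_2)$ else $V(s,\varphi_2)$; $V(s,\langle\!\langle A\rangle\!\rangle\Phi)$ is the maximal $b$ such that there is a set $F_A$ of strategies (one per agent in $A$) with $V(\pi,\Phi)\succeq b$ for all $\pi\in out(s,F_A)$; $V(s,[\![A]\!]\Phi)$ is the maximal $b$ such that for every such $F_A$ some $\pi\in out(s,F_A)$ has $V(\pi,\Phi)\succeq b$. For path formulas: $V(\pi,\varphi)=V(\pi[0],\varphi)$ for state formulas $\varphi$;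 $\neg,\vee,\wedge,\to$ are as for state formulas (with $\pi$ in place of $s$); $V(\pi,\dot\bigcirc\Phi)[k]=V(\pi[1..],\Phi)[k]$; $V(\pi,\dot\Diamond\Phi)[k]=\max_{i\ge0}V(\pi[i..],\Phi)[k]$; $V(\pi,\dot\Box\Phi)=b_1b_2b_3b_4$ with $b_1=\min_{i\ge0}V(\pi[i..],\Phi)[1]$, $b_2=\max_{i\ge0}\min_{j\ge i}V(\pi[j..],\Phi)[2]$, $b_3=\min_{i\ge0}\max_{j\ge i}V(\pi[j..],\Phi)[3]$, $b_4=\max_{i\ge0}V(\pi[i..],\Phi)[4]$. ATL* is the standard logic of Alur, Henzinger and Kupferman with state formulas $\varphi::=p\mid\neg\varphi\mid\varphi\vee\varphi\mid\langle\!\langle A\rangle\!\rangle\Phi\mid[\![A]\!]\Phi$ (and derived connectives) and path formulas $\Phi::=\varphi\mid\neg\Phi\mid\Phi\vee\Phi\mid\bigcirc\Phi\mid\Diamond\Phi\mid\Box\Phi$ (and derived connectives), with Boolean satisfaction relation $\models$: $\mathcal{S},s\models\langle\!\langle A\rangle\!\rangle\Phi$ iff some $F_A$ has all $\pi\in out(s,F_A)$ satisfying $\Phi$; $\mathcal{S},s\models[\![A]\!]\Phi$ iff for every $F_A$ some $\pi\in out(s,F_A)$ satisfies $\Phi$; state formulas hold on a path iff they hold at its first state; $\bigcirc,\Diamond,\Box$ refer to the suffix $\pi[1..]$, some suffix, all suffixes respectively. *)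

From mathcomp Require Import all_boot.
From Stdlib Require Import ClassicalEpsilon.

Set Implicit Arguments.
Unset Strict Implicit.
Unset Printing Implicit Defensive.

Record cgs (AP Ag : finType) := CGS {
  st    : finType;
  act   : finType;
  act0  : act;
  delta : st -> (Ag -> act) -> st;
  lab   : st -> {set AP}
}.

Section CGSDefs.
Variables (AP Ag : finType) (S : cgs AP Ag).

Definition successor (s s' : st S) : Prop := exists v : Ag -> act S, s' = delta s v.

Definition is_path (pi : nat -> st S) : Prop := forall n, successor (pi n) (pi n.+1).

Definition suffix (pi : nat -> st S) (i : nat) : nat -> st S := fun n => pi (i + n).

Definition prefix (pi : nat -> st S) (n : nat) : seq (st S) := mkseq pi n.+1.

(* A strategy maps (nonempty) histories to actions; it is only ever
   applied to nonempty histories. *)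
Definition strategy := seq (st S) -> act S.

(* A set F_A of strategies, one for each agent of A, is given by a
   family Ag -> strategy whose components outside A are irrelevant. *)
Definition stratset := Ag -> strategy.

Definition out (s : st S) (A : {set Ag}) (F : stratset) (pi : nat -> st S) : Prop :=
  pi 0 = s /\
  forall n, exists v : Ag -> act S,
    (forall a, a \in A -> v a = F a (prefix pi n)) /\ pi n.+1 = delta (pi n) v.

End CGSDefs.

Inductive B4 := b1111 | b0111 | b0011 | b0001 | b0000.

Definition rank (b : B4) : nat :=
  match b with b1111 => 4 | b0111 => 3 | b0011 => 2 | b0001 => 1 | b0000 => 0 end.

Definition B4le (b c : B4) : bool := (rank b <= rank c)%N.
Definition B4ge (b c : B4) : bool := B4le c b.

Definition B4max (b c : B4) : B4 := if B4le b c then c else b.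
Definition B4min (b c : B4) : B4 := if B4le b c then b else c.

Definition bit (b : B4) (k : nat) : bool :=
  match b, k with
  | b1111, (1|2|3|4) => true
  | b0111, (2|3|4) => true
  | b0011, (3|4) => true
  | b0001, 4 => true
  | _, _ => false
  end.

(* the element of B4 with bits b1 b2 b3 b4 (bits are always monotone in
   the uses below, so this is exact there) *)
Definition of_bits (x1 x2 x3 x4 : bool) : B4 :=
  if x1 then b1111 else if x2 then b0111 else if x3 then b0011
  else if x4 then b0001 else b0000.

Definition B4neg (b : B4) : B4 := if b is b1111 then b0000 else b1111.
Definition B4impl (b c : B4) : B4 := if B4le b c then b1111 else c.

Definition maxsat (P : B4 -> Prop) : B4 :=
  let d Q := if excluded_middle_informative Q then true else false in
  if d (P b1111) then b1111 else if d (P b0111) then b0111 else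
  if d (P b0011) then b0011 else if d (P b0001) then b0001 else b0000.

Definition pb (P : Prop) : bool := if excluded_middle_informative P then true else false.

Inductive rsform (AP Ag : finType) :=
| RAtom of AP
| RNot of rsform AP Ag
| ROr of rsform AP Ag & rsform AP Ag
| RAnd of rsform AP Ag & rsform AP Ag
| RImpl of rsform AP Ag & rsform AP Ag
| RExists of {set Ag} & rpform AP Ag
| RForall of {set Ag} & rpform AP Ag
with rpform (AP Ag : finType) :=
| RState of rsform AP Ag
| RPNot of rpform AP Ag
| RPOr of rpform AP Ag & rpform AP Ag
| RPAnd of rpform AP Ag & rpform AP Ag
| RPImpl of rpform AP Ag & rpform AP Ag
| RNext of rpform AP Ag
| REv of rpform AP Ag
| RAlw of rpform AP Ag.

Section RSem.
Variables (AP Ag : finType) (S : cgs AP Ag).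

Fixpoint rsval (s : st S) (f : rsform AP Ag) {struct f} : B4 :=
  match f with
  | RAtom p => if p \in lab s then b1111 else b0000
  | RNot g => B4neg (rsval s g)
  | ROr g h => B4max (rsval s g) (rsval s h)
  | RAnd g h => B4min (rsval s g) (rsval s h)
  | RImpl g h => B4impl (rsval s g) (rsval s h)
  | RExists A P => maxsat (fun b => exists F : stratset S,
                      forall pi, out s A F pi -> B4ge (rpval pi P) b)
  | RForall A P => maxsat (fun b => forall F : stratset S,
                      exists pi, out s A F pi /\ B4ge (rpval pi P) b)
  end
with rpval (pi : nat -> st S) (P : rpform AP Ag) {struct P} : B4 :=
  match P with
  | RState g => rsval (pi 0) g
  | RPNot Q => B4neg (rpval pi Q)
  | RPOr Q R => B4max (rpval pi Q) (rpval pi R)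
  | RPAnd Q R => B4min (rpval pi Q) (rpval pi R)
  | RPImpl Q R => B4impl (rpval pi Q) (rpval pi R)
  | RNext Q => rpval (suffix pi 1) Q
  | REv Q =>
      of_bits (pb (exists i, bit (rpval (suffix pi i) Q) 1))
              (pb (exists i, bit (rpval (suffix pi i) Q) 2))
              (pb (exists i, bit (rpval (suffix pi i) Q) 3))
              (pb (exists i, bit (rpval (suffix pi i) Q) 4))
  | RAlw Q =>
      of_bits (pb (forall i, bit (rpval (suffix pi i) Q) 1))
              (pb (exists i, forall j, (i <= j)%N -> bit (rpval (suffix pi j) Q) 2))
              (pb (forall i, exists j, (i <= j)%N /\ bit (rpval (suffix pi j) Q) 3))
              (pb (exists i, bit (rpval (suffix pi i) Q) 4))
  end.

End RSem.

Inductive asform (AP Ag : finType) :=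
| AAtom of AP
| ANot of asform AP Ag
| AOr of asform AP Ag & asform AP Ag
| AExists of {set Ag} & apform AP Ag
| AForall of {set Ag} & apform AP Ag
with apform (AP Ag : finType) :=
| AState of asform AP Ag
| APNot of apform AP Ag
| APOr of apform AP Ag & apform AP Ag
| ANext of apform AP Ag
| AEv of apform AP Ag
| AAlw of apform AP Ag.

Section ASem.
Variables (AP Ag : finType) (S : cgs AP Ag).

Fixpoint asat (s : st S) (f : asform AP Ag) {struct f} : Prop :=
  match f with
  | AAtom p => p \in lab s
  | ANot g => ~ asat s g
  | AOr g h => asat s g \/ asat s h
  | AExists A P => exists F : stratset S, forall pi, out s A F pi -> apsat pi P
  | AForall A P => forall F : stratset S, exists pi, out s A F pi /\ apsat pi P
  end
with apsat (pi : nat -> st S) (P : apform AP Ag) {struct P} : Prop :=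
  match P with
  | AState g => asat (pi 0) g
  | APNot Q => ~ apsat pi Q
  | APOr Q R => apsat pi Q \/ apsat pi R
  | ANext Q => apsat (suffix pi 1) Q
  | AEv Q => exists i, apsat (suffix pi i) Q
  | AAlw Q => forall i, apsat (suffix pi i) Q
  end.

End ASem.

From mathcomp Require Import all_boot.
From Stdlib Require Import ClassicalEpsilon Classical FunctionalExtensionality Setoid.

Set Implicit Arguments.
Unset Strict Implicit.
Unset Printing Implicit Defensive.

(* An element of B4 is determined by its four monotone bits, and every rATL*
   operator acts on bits in a way ATL* can express: negation reads bit 1,
   implication compares all four bits, the strategy quantifiers commute with
   the downward closed threshold conditions, and bit k of the dotted box is
   bit k of its argument under [always], [eventually always], [always
   eventually] and [eventually] for k = 1, 2, 3, 4.  This yields, for every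
   k, an ATL* formula expressing bit k of an rATL* formula, and [v ⪰ t] is
   such a bit for every [t <> 0000].  Conversely, reading the ATL* operators
   as their dotted rATL* counterparts is a right inverse of the bit-1
   translation, which gives (ii). *)

Definition bit_pos (k : nat) := (0 < k <= 4)%N.

Definition thr (k : nat) : B4 :=
  match k with 1 => b1111 | 2 => b0111 | 3 => b0011 | _ => b0001 end.

Lemma bit_thr v k : bit_pos k -> bit v k = B4ge v (thr k).
Proof. by case: k => [|[|[|[|[|k]]]]] // _; case: v. Qed.

Lemma B4_thr_cases t : t = b0000 \/ exists2 k, bit_pos k & t = thr k.
Proof.
by case: t; [right; exists 1 | right; exists 2 | right; exists 3
            | right; exists 4 | left].
Qed.

Lemma bit1E v : bit v 1 <-> v = b1111.
Proof. by case: v. Qed.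

Lemma bit_mono b i j : (0 < i <= j)%N -> (j <= 4)%N -> bit b i -> bit b j.
Proof. by case: b; case: i => [|[|[|[|[|i]]]]]; case: j => [|[|[|[|[|j]]]]]. Qed.

Lemma B4le_trans a b c : B4le a b -> B4le b c -> B4le a c.
Proof. exact: leq_trans. Qed.

Lemma bit_neg b k : bit_pos k -> bit (B4neg b) k = ~~ bit b 1.
Proof. by case: k => [|[|[|[|[|k]]]]] // _; case: b. Qed.

Lemma bit_max b c k : bit (B4max b c) k = bit b k || bit c k.
Proof. by case: k => [|[|[|[|[|k]]]]]; case: b; case: c. Qed.

Lemma bit_min b c k : bit (B4min b c) k = bit b k && bit c k.
Proof. by case: k => [|[|[|[|[|k]]]]]; case: b; case: c. Qed.

Lemma bit_impl b c k : bit_pos k -> bit (B4impl b c) k = B4le b c || bit c k.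
Proof. by case: k => [|[|[|[|[|k]]]]] // _; case: b; case: c. Qed.

Lemma B4le_bits b c :
  B4le b c = [&& bit b 1 ==> bit c 1, bit b 2 ==> bit c 2,
                 bit b 3 ==> bit c 3 & bit b 4 ==> bit c 4].
Proof. by case: b; case: c. Qed.

Lemma bit_of_bits (x1 x2 x3 x4 : bool) k :
  (x1 -> x2) -> (x2 -> x3) -> (x3 -> x4) ->
  bit (of_bits x1 x2 x3 x4) k =
  match k with 1 => x1 | 2 => x2 | 3 => x3 | 4 => x4 | _ => false end.
Proof.
by case: x1; case: x2; case: x3; case: x4; case: k => [|[|[|[|[|k]]]]] //= h1 h2 h3;
  first [by move: (h1 isT) | by move: (h2 isT) | by move: (h3 isT)].
Qed.

Lemma pbE (P : Prop) : pb P <-> P.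
Proof. by rewrite /pb; case: excluded_middle_informative. Qed.

Lemma maxsat_bit (P : B4 -> Prop) k :
  (forall b c, B4le c b -> P b -> P c) -> bit_pos k ->
  bit (maxsat P) k <-> P (thr k).
Proof.
move=> Pdown hk; rewrite /maxsat.
repeat (case: excluded_middle_informative => ?);
  case: k hk => [|[|[|[|[|k]]]]] // _ /=; split=> // H; try contradiction;
  first [ by apply: (Pdown b1111) | by apply: (Pdown b0111)
        | by apply: (Pdown b0011) | by apply: (Pdown b0001) ].
Qed.

(* The values of [REv Q] and [RAlw Q] on [pi], for [u i := rpval (suffix pi i) Q]. *)
Definition ev_bits (u : nat -> B4) : B4 :=
  of_bits (pb (exists i, bit (u i) 1)) (pb (exists i, bit (u i) 2))
          (pb (exists i, bit (u i) 3)) (pb (exists i, bit (u i) 4)).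

Definition alw_bits (u : nat -> B4) : B4 :=
  of_bits (pb (forall i, bit (u i) 1))
          (pb (exists i, forall j, (i <= j)%N -> bit (u j) 2))
          (pb (forall i, exists j, (i <= j)%N /\ bit (u j) 3))
          (pb (exists i, bit (u i) 4)).

Lemma bit_ev_bits u k : bit_pos k -> bit (ev_bits u) k = pb (exists i, bit (u i) k).
Proof.
move=> hk; have mono i j : (0 < i <= j)%N -> (j <= 4)%N ->
    pb (exists n, bit (u n) i) -> pb (exists n, bit (u n) j).
  by move=> hij hj /pbE [n hn]; apply/pbE; exists n; apply: bit_mono hn.
rewrite bit_of_bits; try exact: mono.
by case: k hk => [|[|[|[|[|k]]]]].
Qed.

Lemma bit_alw_bits u k :
  bit (alw_bits u) k =
  match k with
  | 1 => pb (forall i, bit (u i) 1)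
  | 2 => pb (exists i, forall j, (i <= j)%N -> bit (u j) 2)
  | 3 => pb (forall i, exists j, (i <= j)%N /\ bit (u j) 3)
  | 4 => pb (exists i, bit (u i) 4)
  | _ => false
  end.
Proof.
apply: bit_of_bits => /pbE h; apply/pbE.
- by exists 0 => j _; apply: bit_mono (h j).
- move=> i; have [n hn] := h; exists (maxn n i); split; first exact: leq_maxr.
  by apply: bit_mono (hn _ (leq_maxl _ _)).
- by have [j [_ hj]] := h 0; exists j; apply: bit_mono hj.
Qed.

Section Paths.
Variables (AP Ag : finType) (S : cgs AP Ag).
Implicit Types (pi : nat -> st S) (P : (nat -> st S) -> Prop).

Lemma suffix_suffix pi i j : suffix (suffix pi i) j = suffix pi (i + j).
Proof. by apply: functional_extensionality => n; rewrite /suffix addnA. Qed.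

Lemma ev_alw_suffix P pi :
  (exists i, forall j, P (suffix (suffix pi i) j)) <->
  (exists i, forall j, (i <= j)%N -> P (suffix pi j)).
Proof.
split=> -[i h]; exists i => j.
- by move=> hij; rewrite -(subnKC hij) -suffix_suffix.
- by rewrite suffix_suffix; apply: h; apply: leq_addr.
Qed.

Lemma alw_ev_suffix P pi :
  (forall i, exists j, P (suffix (suffix pi i) j)) <->
  (forall i, exists j, (i <= j)%N /\ P (suffix pi j)).
Proof.
split=> h i; have [j hj] := h i.
- by exists (i + j); rewrite -suffix_suffix leq_addr.
- by case: hj => hij hj; exists (j - i); rewrite suffix_suffix subnKC.
Qed.

End Paths.

Section ATLConnectives.
Variables (AP Ag : finType) (S : cgs AP Ag).

Definition aand (a b : asform AP Ag) := ANot (AOr (ANot a) (ANot b)).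
Definition aimp (a b : asform AP Ag) := AOr (ANot a) b.
Definition apand (a b : apform AP Ag) := APNot (APOr (APNot a) (APNot b)).
Definition apimp (a b : apform AP Ag) := APOr (APNot a) b.

Definition aleq (f g : nat -> asform AP Ag) :=
  aand (aand (aimp (f 1) (g 1)) (aimp (f 2) (g 2)))
       (aand (aimp (f 3) (g 3)) (aimp (f 4) (g 4))).
Definition apleq (f g : nat -> apform AP Ag) :=
  apand (apand (apimp (f 1) (g 1)) (apimp (f 2) (g 2)))
        (apand (apimp (f 3) (g 3)) (apimp (f 4) (g 4))).

Lemma classical_and (A B : Prop) : ~ (~ A \/ ~ B) <-> A /\ B.
Proof. by split=> [h | [ha hb] []] //; split; apply: NNPP => hn; apply: h; tauto. Qed.

Lemma classical_imp (A B : Prop) : ~ A \/ B <-> (A -> B).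
Proof. by split=> [[] | h]; [tauto | tauto | case: (classic A); tauto]. Qed.

Lemma asat_aleq (s : st S) f g b c :
  (forall k, bit_pos k -> asat s (f k) <-> bit b k) ->
  (forall k, bit_pos k -> asat s (g k) <-> bit c k) ->
  asat s (aleq f g) <-> B4le b c.
Proof.
move=> hf hg; rewrite /= !classical_and !classical_imp B4le_bits.
rewrite !hf // !hg // {hf hg}.
by case: b; case: c; split=> //=; intuition.
Qed.

Lemma apsat_apleq (pi : nat -> st S) f g b c :
  (forall k, bit_pos k -> apsat pi (f k) <-> bit b k) ->
  (forall k, bit_pos k -> apsat pi (g k) <-> bit c k) ->
  apsat pi (apleq f g) <-> B4le b c.
Proof.
move=> hf hg; rewrite /= !classical_and !classical_imp B4le_bits.
rewrite !hf // !hg // {hf hg}.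
by case: b; case: c; split=> //=; intuition.
Qed.

End ATLConnectives.

Section Translation.
Variables AP Ag : finType.

Fixpoint tr_state (f : rsform AP Ag) (k : nat) {struct f} : asform AP Ag :=
  match f with
  | RAtom p => AAtom Ag p
  | RNot g => ANot (tr_state g 1)
  | ROr g h => AOr (tr_state g k) (tr_state h k)
  | RAnd g h => aand (tr_state g k) (tr_state h k)
  | RImpl g h => AOr (aleq (tr_state g) (tr_state h)) (tr_state h k)
  | RExists A P => AExists A (tr_path P k)
  | RForall A P => AForall A (tr_path P k)
  end
with tr_path (P : rpform AP Ag) (k : nat) {struct P} : apform AP Ag :=
  match P with
  | RState g => AState (tr_state g k)
  | RPNot Q => APNot (tr_path Q 1)
  | RPOr Q R => APOr (tr_path Q k) (tr_path R k)
  | RPAnd Q R => apand (tr_path Q k) (tr_path R k)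
  | RPImpl Q R => APOr (apleq (tr_path Q) (tr_path R)) (tr_path R k)
  | RNext Q => ANext (tr_path Q k)
  | REv Q => AEv (tr_path Q k)
  | RAlw Q => match k with
              | 1 => AAlw (tr_path Q 1)
              | 2 => AEv (AAlw (tr_path Q 2))
              | 3 => AAlw (AEv (tr_path Q 3))
              | _ => AEv (tr_path Q 4)
              end
  end.

Fixpoint embed_state (f : asform AP Ag) : rsform AP Ag :=
  match f with
  | AAtom p => RAtom Ag p
  | ANot g => RNot (embed_state g)
  | AOr g h => ROr (embed_state g) (embed_state h)
  | AExists A P => RExists A (embed_path P)
  | AForall A P => RForall A (embed_path P)
  end
with embed_path (P : apform AP Ag) : rpform AP Ag :=
  match P with
  | AState g => RState (embed_state g)
  | APNot Q => RPNot (embed_path Q)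
  | APOr Q R => RPOr (embed_path Q) (embed_path R)
  | ANext Q => RNext (embed_path Q)
  | AEv Q => REv (embed_path Q)
  | AAlw Q => RAlw (embed_path Q)
  end.

Scheme rsform_ind2 := Induction for rsform Sort Prop
with rpform_ind2 := Induction for rpform Sort Prop.
Combined Scheme rsform_rpform_ind from rsform_ind2, rpform_ind2.

Scheme asform_ind2 := Induction for asform Sort Prop
with apform_ind2 := Induction for apform Sort Prop.
Combined Scheme asform_apform_ind from asform_ind2, apform_ind2.

Lemma tr_embed :
  (forall f, tr_state (embed_state f) 1 = f) /\
  (forall P, tr_path (embed_path P) 1 = P).
Proof. by apply: asform_apform_ind => /= *; congruence. Qed.

Lemma tr_state_embed f : tr_state (embed_state f) 1 = f.
Proof. exact: (proj1 tr_embed). Qed.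

Variable S : cgs AP Ag.

Lemma exists_strategy_downward (s : st S) A P :
  forall b c, B4le c b ->
  (exists F : stratset S, forall pi, out s A F pi -> B4ge (rpval pi P) b) ->
  (exists F : stratset S, forall pi, out s A F pi -> B4ge (rpval pi P) c).
Proof. by move=> b c cb [F HF]; exists F => pi /HF; apply: B4le_trans. Qed.

Lemma forall_strategy_downward (s : st S) A P :
  forall b c, B4le c b ->
  (forall F : stratset S, exists pi, out s A F pi /\ B4ge (rpval pi P) b) ->
  (forall F : stratset S, exists pi, out s A F pi /\ B4ge (rpval pi P) c).
Proof.
move=> b c cb HF F; have [pi [hpi hb]] := HF F.
by exists pi; split=> //; apply: B4le_trans hb.
Qed.

Lemma tr_bit :
  (forall f (s : st S) k, bit_pos k -> asat s (tr_state f k) <-> bit (rsval s f) k) /\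
  (forall P (pi : nat -> st S) k,
     bit_pos k -> apsat pi (tr_path P k) <-> bit (rpval pi P) k).
Proof.
apply: rsform_rpform_ind.
- by move=> p s k hk /=; case: (p \in lab s); case: k hk => [|[|[|[|[|k]]]]].
- move=> g IH s k hk /=; rewrite bit_neg // IH //; exact: rwP negP.
- move=> g IHg h IHh s k hk /=; rewrite bit_max IHg // IHh //; exact: rwP orP.
- move=> g IHg h IHh s k hk /=; rewrite classical_and IHg // IHh // bit_min.
  exact: rwP andP.
- move=> g IHg h IHh s k hk.
  transitivity (B4le (rsval s g) (rsval s h) \/ asat s (tr_state h k)).
    exact: or_iff_compat_r _ (asat_aleq (IHg s) (IHh s)).
  by rewrite IHh // bit_impl //; apply: rwP orP.
- move=> A P IH s k hk /=; rewrite maxsat_bit //; last exact: exists_strategy_downward.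
  by setoid_rewrite <- bit_thr; [setoid_rewrite (fun pi => IH pi k hk)|].
- move=> A P IH s k hk /=; rewrite maxsat_bit //; last exact: forall_strategy_downward.
  by setoid_rewrite <- bit_thr; [setoid_rewrite (fun pi => IH pi k hk)|].
- by move=> g IH pi k hk /=; apply: IH.
- move=> Q IH pi k hk /=; rewrite bit_neg // IH //; exact: rwP negP.
- move=> Q IHQ R IHR pi k hk /=; rewrite bit_max IHQ // IHR //; exact: rwP orP.
- move=> Q IHQ R IHR pi k hk /=; rewrite classical_and IHQ // IHR // bit_min.
  exact: rwP andP.
- move=> Q IHQ R IHR pi k hk.
  transitivity (B4le (rpval pi Q) (rpval pi R) \/ apsat pi (tr_path R k)).
    exact: or_iff_compat_r _ (apsat_apleq (IHQ pi) (IHR pi)).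
  by rewrite IHR // bit_impl //; apply: rwP orP.
- by move=> Q IH pi k hk; exact: (IH (suffix pi 1) k hk).
- move=> Q IH pi k hk; rewrite [rpval _ _]/= -/(ev_bits _) bit_ev_bits // pbE /=.
  by setoid_rewrite (fun pi => IH pi k hk).
- move=> Q IH pi k hk; rewrite [rpval _ _]/= -/(alw_bits _) bit_alw_bits.
  have {}IH := fun pi => IH pi k hk.
  case: k hk IH => [|[|[|[|[|k]]]]] // _ IH; rewrite pbE /=; setoid_rewrite IH => //.
  + exact: ev_alw_suffix (fun rho => bit (rpval rho Q) 2) pi.
  + exact: alw_ev_suffix (fun rho => bit (rpval rho Q) 3) pi.
Qed.

Lemma tr_state_bit f (s : st S) k :
  bit_pos k -> asat s (tr_state f k) <-> bit (rsval s f) k.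
Proof. exact: (proj1 tr_bit). Qed.

End Translation.

Theorem corollary2 (AP Ag : finType) :
  (forall (phi : rsform AP Ag) (t : B4),
     exists phi_t : asform AP Ag,
       forall (S : cgs AP Ag) (s : st S),
         B4ge (rsval s phi) t <-> asat s phi_t)
  /\
  (forall psi : asform AP Ag,
     exists psi_star : rsform AP Ag,
       forall (S : cgs AP Ag) (s : st S),
         asat s psi <-> rsval s psi_star = b1111).
Proof.
split=> [phi t | psi].
- have [-> | [k hk ->]] := B4_thr_cases t.
    exists (AOr (tr_state phi 1) (ANot (tr_state phi 1))) => S s.
    by split=> _; [exact: classic | case: (rsval s phi)].
  exists (tr_state phi k) => S s.
  by rewrite -bit_thr // tr_state_bit.
- exists (embed_state psi) => S s.
  by rewrite -{1}(tr_state_embed psi) tr_state_bit // bit1E.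
Qed.
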